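(* Let $G$ be a finite group and $q$ a prime divisor of $|G|$. Let $Q\in{\rm Syl}_q(G)$ with $|Q|=q^m$, $m\geq 1$. If $Q$ is cyclic and $G$ has exactly $t$ Sylow $q$-subgroups, then $|F_{q^m}(G)|\geq q^m+(t-1)(q^m-q^{m-1})$.
   Context: For a finite group $G$ and a positive integer $n$, $F_n(G)=\{g\in G\mid g^n=1\}$. *)

From mathcomp Require Import all_boot all_fingroup all_solvable.
Set Implicit Arguments. Unset Strict Implicit. Unset Printing Implicit Defensive.
Local Open Scope group_scope.

Definition Fn (gT : finGroupType) (n : nat) (G : {set gT}) : {set gT} :=
  [set g in G | g ^+ n == 1].

From mathcomp Require Import all_boot all_fingroup all_solvable.

Set Implicit Arguments.
Unset Strict Implicit.
Unset Printing Implicit Defensive.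

Local Open Scope group_scope.

(* The elements of [G] of order [q^m = #|Q|] are exactly the generators of the
   Sylow q-subgroups; these are cyclic, pairwise conjugate, and no element
   generates two of them, so there are [t * phi(q^m)] such elements, of which
   [phi(q^m)] lie in [Q]. Together with [Q] itself they all satisfy
   [x^(q^m) = 1]. *)

Lemma FnE (gT : finGroupType) (n : nat) (G : {set gT}) :
  Fn n G = [set x in G | (#[x] %| n)%N].
Proof. by apply/setP=> x; rewrite !inE order_dvdn. Qed.

Lemma totient_prime_power p e :
  prime p -> (0 < e)%N -> totient (p ^ e) = (p ^ e - p ^ e.-1)%N.
Proof.
move=> p_pr e_gt0.
by rewrite totient_pfactor // -subn1 mulnBl mul1n -expnS prednK.
Qed.

Lemma generatorE (gT : finGroupType) (H : {group gT}) x :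
  x \in H -> generator H x = (#[x] == #|H|).
Proof.
move=> Hx; rewrite /generator eq_sym eqEcard cycle_subG Hx /= eqn_leq.
by rewrite [(#[x] <= _)%N]subset_leq_card ?cycle_subG.
Qed.

Lemma card_cyclic_generators (gT : finGroupType) (H : {group gT}) :
  cyclic H -> #|[set x | generator H x]| = totient #|H|.
Proof. by case/cyclicP=> a ->; rewrite totient_gen. Qed.

Section SylowOrderElements.

Variables (gT : finGroupType) (q : nat) (G Q : {group gT}).
Hypothesis sylQ : q.-Sylow(G) Q.

Let E := [set x in G | #[x] == #|Q|].

Lemma card_Sylow (P : {group gT}) : q.-Sylow(G) P -> #|P| = #|Q|.
Proof. by move=> sylP; rewrite (card_Hall sylP) (card_Hall sylQ). Qed.

Lemma Sylow_cycleE x : x \in G -> q.-Sylow(G) <[x]> = (#[x] == #|Q|).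
Proof. by move=> Gx; rewrite pHallE cycle_subG Gx (card_Hall sylQ). Qed.

Lemma cyclic_Sylow (P : {group gT}) : cyclic Q -> q.-Sylow(G) P -> cyclic P.
Proof. by move=> cycQ /(Sylow_trans sylQ)[g _ ->]; rewrite cyclicJ. Qed.

Lemma card_Sylow_order_elements :
  #|E| = (\sum_(P in 'Syl_q(G)) #|[set x | generator P x]|)%N.
Proof.
rewrite -sum1_card (partition_big (fun x => <[x]>%G) (mem 'Syl_q(G))) /=; last first.
  by move=> x; rewrite !inE => /andP[Gx ox]; rewrite Sylow_cycleE.
apply: eq_bigr => P; rewrite inE => sylP; rewrite -sum1_card; apply: eq_bigl => x.
rewrite !inE -val_eqE /= /generator [_ == <[x]>]eq_sym; apply: andb_idl => /eqP defP.
have Px : x \in P by rewrite -defP cycle_id.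
by rewrite (subsetP (pHall_sub sylP)) // -(card_Sylow sylP) /order defP eqxx.
Qed.

Lemma card_cyclic_Sylow_order_elements :
  cyclic Q -> #|E| = (#|'Syl_q(G)| * totient #|Q|)%N.
Proof.
move=> cycQ; rewrite card_Sylow_order_elements -sum_nat_const.
apply: eq_bigr => P; rewrite inE => sylP.
by rewrite card_cyclic_generators ?(cyclic_Sylow cycQ) ?(card_Sylow sylP).
Qed.

Lemma Sylow_setI_order_elements : Q :&: E = [set x | generator Q x].
Proof.
apply/setP=> x; rewrite !inE; apply/idP/idP=> [/and3P[Qx _ ox] | genQx].
  by rewrite generatorE.
have Qx : x \in Q by move: genQx => /eqP->; apply: cycle_id.
by rewrite Qx (subsetP (pHall_sub sylQ)) // -generatorE.
Qed.

Lemma Sylow_order_elements_subFn : Q :|: E \subset Fn #|Q| G.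
Proof.
apply/subsetP=> x; rewrite FnE !inE => /orP[Qx | /andP[-> /eqP->]]; last exact: dvdnn.
by rewrite (subsetP (pHall_sub sylQ)) // order_dvdG.
Qed.

End SylowOrderElements.

Theorem lemma2p1 (gT : finGroupType) (G Q : {group gT}) (q m t : nat) :
  prime q -> (q %| #|G|)%N ->
  Q \in 'Syl_q(G) -> #|Q| = (q ^ m)%N -> (1 <= m)%N ->
  cyclic Q -> #|'Syl_q(G)| = t ->
  (q ^ m + (t - 1) * (q ^ m - q ^ m.-1) <= #|Fn (q ^ m) G|)%N.
Proof.
move=> q_pr _ QS cardQ m_gt0 cycQ cardS; have sylQ : q.-Sylow(G) Q by rewrite inE in QS.
have t_gt0 : (0 < t)%N by rewrite -cardS; apply/card_gt0P; exists Q.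
have := subset_leq_card (Sylow_order_elements_subFn sylQ).
rewrite cardsU (Sylow_setI_order_elements sylQ) card_cyclic_generators //.
rewrite (card_cyclic_Sylow_order_elements sylQ cycQ) cardS cardQ -totient_prime_power //.
by rewrite mulnBl mul1n addnBA // leq_pmull.
Qed.
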